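(* In the work extraction game described in the context, fix an initial state $\rho$ (energies $E_1,\dots,E_d$, occupation probabilities $\lambda_1,\dots,\lambda_d$), a final state $\sigma$ (energies $F_1,\dots,F_d$, occupation probabilities $\nu_1,\dots,\nu_d$), a number $\varepsilon\in[0,1)$ and a threshold $W\in\mathbb{R}$. Suppose a strategy $\mathcal S$ satisfies the following. It starts from the energies $E$ with the initial level distributed according to $\lambda$. It ends with the energies $F$. It succeeds, meaning that the total extracted work satisfies $W_{\rm tot}\ge W$, with probability at least $1-\varepsilon$. Conditioned on success, the final occupied level is distributed according to $\nu$. Then $$W\le W^\varepsilon(\rho\to\sigma)=kT\ln M\!\left(\tfrac{G^T(\rho)}{1-\varepsilon}\,\Big\|\,G^T(\sigma)\right).$$
   Context: Conventions. The constants $k>0$ (Boltzmann's constant) and $T>0$ (temperature) are fixed. A state is a finite-level system with energies $E_1,\dots,E_d\in\mathbb{R}\cup\{+\infty\}$, not all $+\infty$, together with a diagonal density matrix $\rho=\sum_i\lambda_i|e_i\rangle\langle e_i|$. Equivalently, it is a probability vector $(\lambda_i)$ over the levels, and we require $\lambda_i=0$ whenever $E_i=+\infty$. Gibbs rescaling. $G^T(\rho)$ is the function on $[0,\infty)$ built as follows. Each level $i$ with $E_i<\infty$ is represented by a block: an interval of length $e^{-E_i/kT}$ on which the function takes the constant value $\lambda_i e^{E_i/kT}$, so the block has area $\lambda_i$. The blocks are placed consecutively starting at $0$, in order of nonincreasing height. The function is $0$ beyond $Z=\sum_{i:E_i<\infty}e^{-E_i/kT}$. Thus $G^T(\rho)$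 is a nonincreasing probability density supported in $[0,Z]$. Relative mixedness. For nonincreasing integrable functions $f,g\ge 0$ on $[0,\infty)$, $$M(f\|g):=\max\Big\{m>0:\ \int_0^l f(x)\,dx\ge\int_0^{lm}g(x)\,dx\ \text{for all } l\ge 0\Big\}.$$ For $\varepsilon\in[0,1)$ define $$W^\varepsilon(\rho\to\sigma):=kT\ln M\big(G^T(\rho)/(1-\varepsilon)\,\big\|\,G^T(\sigma)\big).$$ Work extraction game. - A working medium has levels $1,\dots,d$. At each time it has an energy assignment $E\in(\mathbb{R}\cup\{+\infty\})^d$ and occupies exactly one (random) level. - For an assignment $E$, the Gibbs vector is $\gamma_E(i)=e^{-E_i/kT}/\sum_j e^{-E_j/kT}$, which is $0$ for levels at $+\infty$. - A strategy is a finite sequence of elementary steps, fixed in advance and independent of the random outcomes. Each step is one of two kinds. - (i) Thermalisation. Choose a $d\times d$ column-stochastic matrix $B$ with $B\gamma_E=\gamma_E$ for the current energies $E$. If the current level is $j$, the new level is $i$ with probability $B_{ij}$. Energies are unchanged and no work is exchanged. - (ii) Energy change. Choose a set $S$ of levels and new values for the energies of the levels in $S$; the other energies are unchanged and the occupied level is unchanged. If the occupied level $i$ lies in $S$, the work reservoir receives extracted work $E_i^{\rm old}-E_i^{\rm new}$; otherwise it receives $0$. (The paper changes all levels in $S$ by a common amount; arbitrary changes are compositions of such steps.) - The total extracted work $W_{\rm tot}$ is the sum over steps. By convention, a realisation in which some step yields work $-\infty$ (an occupied level raised to $+\infty$) has $W_{\rm tot}=-\infty$. - A run is successful for threshold $W$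 if $W_{\rm tot}\ge W$. *)

From Stdlib Require Import Reals Lra Lia List.
Import ListNotations.
Open Scope R_scope.

(* Energies take values in R u {+oo}: [Some a] is a finite energy a, [None] is +oo.
   Levels of a d-level system are the naturals 0 .. d-1; values of the
   functions at indices >= d are irrelevant. *)
Definition energy := option R.

Fixpoint rsum (n : nat) (f : nat -> R) : R :=
  match n with O => 0 | S m => rsum m f + f m end.

Definition is_state (d : nat) (E : nat -> energy) (lam : nat -> R) : Prop :=
  (exists i, (i < d)%nat /\ E i <> None) /\
  (forall i, (i < d)%nat -> 0 <= lam i) /\
  rsum d lam = 1 /\
  (forall i, (i < d)%nat -> E i = None -> lam i = 0).

Definition bwidth (k T : R) (e : energy) : R :=
  match e with Some a => exp (- a / (k * T)) | None => 0 end.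

Definition bheight (k T : R) (e : energy) (p : R) : R :=
  match e with Some a => p * exp (a / (k * T)) | None => 0 end.

(* Block j is placed before block i: order of nonincreasing height,
   ties broken by the index (the resulting function does not depend on
   the tie-breaking). Only finite levels have blocks. *)
Definition before (k T : R) (E : nat -> energy) (lam : nat -> R) (j i : nat) : bool :=
  match E j with
  | None => false
  | Some _ =>
      if Rlt_dec (bheight k T (E i) (lam i)) (bheight k T (E j) (lam j)) then true
      else if Req_EM_T (bheight k T (E j) (lam j)) (bheight k T (E i) (lam i))
           then Nat.ltb j i else false
  end.

Definition bstart (k T : R) (d : nat) (E : nat -> energy) (lam : nat -> R) (i : nat) : R :=
  rsum d (fun j => if before k T E lam j i then bwidth k T (E j) else 0).

(* G^T(rho) as a function on R (it vanishes on x < 0 and beyond Z). *)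
Definition gibbs_rescaling (k T : R) (d : nat) (E : nat -> energy) (lam : nat -> R)
  (x : R) : R :=
  rsum d (fun i =>
    match E i with
    | None => 0
    | Some _ =>
        if Rle_dec (bstart k T d E lam i) x then
          if Rlt_dec x (bstart k T d E lam i + bwidth k T (E i)) then
            bheight k T (E i) (lam i)
          else 0
        else 0
    end).

Definition integral0 (f : R -> R) (l v : R) : Prop :=
  exists pr : Riemann_integrable f 0 l, RiemannInt pr = v.

Definition mixedness_admissible (f g : R -> R) (m : R) : Prop :=
  0 < m /\
  forall l, 0 <= l ->
    exists v1 v2, integral0 f l v1 /\ integral0 g (l * m) v2 /\ v2 <= v1.

Definition is_rel_mixedness (f g : R -> R) (Mv : R) : Prop :=
  mixedness_admissible f g Mv /\
  (forall m, mixedness_admissible f g m -> m <= Mv).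

(* Elementary steps: thermalisation with a matrix B (B i j = prob j -> i),
   or an energy change to a new assignment E' (levels with E' i = E i are
   unchanged; arbitrary simultaneous changes are compositions of the
   paper's elementary changes). *)
Inductive step : Type :=
| Therm (B : nat -> nat -> R)
| Change (E' : nat -> energy).

Definition strategy := list step.

Definition gibbs_vec (k T : R) (d : nat) (E : nat -> energy) (i : nat) : R :=
  bwidth k T (E i) / rsum d (fun j => bwidth k T (E j)).

Definition col_stochastic (d : nat) (B : nat -> nat -> R) : Prop :=
  (forall i j, (i < d)%nat -> (j < d)%nat -> 0 <= B i j) /\
  (forall j, (j < d)%nat -> rsum d (fun i => B i j) = 1).

Definition preserves_gibbs (k T : R) (d : nat) (E : nat -> energy) (B : nat -> nat -> R) : Prop :=
  forall i, (i < d)%nat ->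
    rsum d (fun j => B i j * gibbs_vec k T d E j) = gibbs_vec k T d E i.

Fixpoint valid_strategy (k T : R) (d : nat) (E : nat -> energy) (S : strategy) : Prop :=
  match S with
  | nil => True
  | Therm B :: S' => col_stochastic d B /\ preserves_gibbs k T d E B /\ valid_strategy k T d E S'
  | Change E' :: S' => valid_strategy k T d E' S'
  end.

Fixpoint final_energies (E : nat -> energy) (S : strategy) : nat -> energy :=
  match S with
  | nil => E
  | Therm _ :: S' => final_energies E S'
  | Change E' :: S' => final_energies E' S'
  end.

(* Extracted work of the occupied level going from energy eo to en;
   None stands for work -oo (a failed realisation). *)
Definition step_work (eo en : energy) : option R :=
  match eo, en with
  | Some a, Some b => Some (a - b)
  | Some _, None => None          (* occupied level raised to +oo *)
  | None, None => Some 0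
  | None, Some _ => None          (* only on failed / probability-0 paths *)
  end.

Definition oadd (a b : option R) : option R :=
  match a, b with Some x, Some y => Some (x + y) | _, _ => None end.

(* an outcome: (probability weight, final level, total work (None = -oo)) *)
Definition outcome := (R * nat * option R)%type.

Definition scale_out (p : R) (o : outcome) : outcome :=
  match o with (q, l, w) => (p * q, l, w) end.

Definition addw_out (a : option R) (o : outcome) : outcome :=
  match o with (q, l, w) => (q, l, oadd a w) end.

Fixpoint run (d : nat) (E : nat -> energy) (S : strategy) (i : nat) : list outcome :=
  match S with
  | nil => [(1, i, Some 0)]
  | Therm B :: S' =>
      flat_map (fun j => map (scale_out (B j i)) (run d E S' j)) (seq 0 d)
  | Change E' :: S' =>
      map (addw_out (step_work (E i) (E' i))) (run d E' S' i)
  end.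

Definition outcomes (d : nat) (E : nat -> energy) (lam : nat -> R) (S : strategy) : list outcome :=
  flat_map (fun i => map (scale_out (lam i)) (run d E S i)) (seq 0 d).

Definition successful (W : R) (w : option R) : bool :=
  match w with Some x => if Rle_dec W x then true else false | None => false end.

Definition prob_success (d : nat) (E : nat -> energy) (lam : nat -> R) (S : strategy) (W : R) : R :=
  fold_right (fun o acc => match o with (q, _, w) => (if successful W w then q else 0) + acc end)
    0 (outcomes d E lam S).

Definition prob_success_at (d : nat) (E : nat -> energy) (lam : nat -> R) (S : strategy) (W : R)
  (i : nat) : R :=
  fold_right (fun o acc => match o with (q, l, w) =>
      (if successful W w then if Nat.eqb l i then q else 0 else 0) + acc end)
    0 (outcomes d E lam S).

From Coquelicot Require Import Coquelicot.
From Stdlib Require Import Reals Lra Lia List Classical.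
Import ListNotations.
Open Scope R_scope.

(** For weights [phi] in [[0,1]] on the final levels, the potential
       [sum_i e^{-E_i/kT} e^{-u_i/kT} P_i(u_i + W_tot >= W; phi)] of a configuration with
       banked works [u_i] never increases along a strategy: Gibbs-preserving
       thermalisations keep the Gibbs weights, energy changes turn Gibbs weight into
       banked work.  At the end it is at most [e^{-W/kT} sum_i e^{-F_i/kT} phi_i]
       ([potential_invariant]).
    2. Taking [phi] an indicator gives the hinge form of the bound: for every [mu >= 0],
       [sum_i ((1-eps) nu_i - mu e^{-W/kT} e^{-F_i/kT})^+ <= sum_i (lam_i - mu e^{-E_i/kT})^+]
       ([hinge_work_bound]).
    3. The Gibbs rescaling is a staircase of blocks, and its integral over [[0, X]] is
       [min_{mu >= 0} (mu X + sum_i (lam_i - mu e^{-E_i/kT})^+)] ([gibbs_integral],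
       [cumul_le_hinge], [hinge_attained]).  So the hinge inequalities say that the ratio
       [e^{W/kT}] is admissible in the definition of the relative mixedness
       ([dominance_of_hinge]).
    4. The admissible ratios form a bounded set containing its supremum, which is
       therefore the relative mixedness, and it is at least [e^{W/kT}]
       ([rel_mixedness_exists]). *)

Lemma rsum_ext n f g : (forall i, (i < n)%nat -> f i = g i) -> rsum n f = rsum n g.
Proof.
  induction n as [|n IH]; simpl; intros H; auto.
  rewrite IH by (intros; apply H; lia). rewrite H by lia. reflexivity.
Qed.

Lemma rsum_le n f g : (forall i, (i < n)%nat -> f i <= g i) -> rsum n f <= rsum n g.
Proof.
  induction n as [|n IH]; simpl; intros H; [lra|].
  assert (f n <= g n) by (apply H; lia).
  assert (rsum n f <= rsum n g) by (apply IH; intros; apply H; lia). lra.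
Qed.

Lemma rsum_plus n f g : rsum n (fun i => f i + g i) = rsum n f + rsum n g.
Proof. induction n; simpl; [lra|]. rewrite IHn; lra. Qed.

Lemma rsum_scal n c f : rsum n (fun i => c * f i) = c * rsum n f.
Proof. induction n; simpl; [lra|]. rewrite IHn; lra. Qed.

Lemma rsum_zero n f : (forall i, (i < n)%nat -> f i = 0) -> rsum n f = 0.
Proof.
  intros H. rewrite (rsum_ext n f (fun _ => 0)) by auto.
  clear. induction n; simpl; lra.
Qed.

Lemma rsum_nonneg n f : (forall i, (i < n)%nat -> 0 <= f i) -> 0 <= rsum n f.
Proof. intros H. rewrite <- (rsum_zero n (fun _ => 0)) by auto. apply rsum_le; auto. Qed.

Lemma rsum_single n m a : (m < n)%nat -> rsum n (fun i => if Nat.eqb i m then a else 0) = a.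
Proof.
  induction n; intros H; [lia|]. simpl. destruct (Nat.eqb_spec n m).
  - subst. rewrite rsum_zero; [lra|]. intros i Hi. destruct (Nat.eqb_spec i m); [lia|auto].
  - rewrite IHn by lia. lra.
Qed.

Lemma rsum_pick n f l :
  rsum n (fun i => f i * (if Nat.eqb l i then 1 else 0)) = if Nat.ltb l n then f l else 0.
Proof.
  induction n; simpl; [lra|]. rewrite IHn. destruct (Nat.eqb_spec l n).
  - subst. destruct (Nat.ltb_spec n n); [lia|]. destruct (Nat.ltb_spec n (S n)); [lra|lia].
  - destruct (Nat.ltb_spec l n); destruct (Nat.ltb_spec l (S n)); try lia; lra.
Qed.

Lemma rsum_swap n m (f : nat -> nat -> R) :
  rsum n (fun i => rsum m (fun j => f i j)) = rsum m (fun j => rsum n (fun i => f i j)).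
Proof.
  induction n; simpl.
  - symmetry; apply rsum_zero; auto.
  - rewrite IHn, <- rsum_plus. reflexivity.
Qed.

Lemma rsum_ge_term n f i :
  (forall j, (j < n)%nat -> 0 <= f j) -> (i < n)%nat -> f i <= rsum n f.
Proof.
  intros H Hi. rewrite <- (rsum_single n i (f i)) by auto. apply rsum_le.
  intros j Hj. destruct (Nat.eqb_spec j i); subst; [lra|auto].
Qed.

Lemma exp_le_mono x y : x <= y -> exp x <= exp y.
Proof. intros H. destruct (Rle_lt_or_eq_dec _ _ H); [left; apply exp_increasing; auto|subst; lra]. Qed.

Definition pos_part (x : R) : R := Rmax 0 x.

Lemma pos_part_ge0 x : 0 <= pos_part x.
Proof. apply Rmax_l. Qed.

Lemma pos_part_ge x : x <= pos_part x.
Proof. apply Rmax_r. Qed.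

Lemma pos_part_id x : 0 <= x -> pos_part x = x.
Proof. intros; unfold pos_part; rewrite Rmax_right; lra. Qed.

Lemma pos_part_zero x : x <= 0 -> pos_part x = 0.
Proof. intros; unfold pos_part; rewrite Rmax_left; lra. Qed.

Lemma pos_part_scal c x : 0 <= c -> pos_part (c * x) = c * pos_part x.
Proof.
  intros. destruct (Rle_dec 0 x).
  - rewrite !pos_part_id; nra.
  - rewrite !pos_part_zero; nra.
Qed.

Lemma pos_part_mono x y : x <= y -> pos_part x <= pos_part y.
Proof. unfold pos_part, Rmax. intros. repeat destruct Rle_dec; lra. Qed.

Lemma pos_part_weighted x y v : 0 <= v <= 1 -> 0 <= y -> x * v <= pos_part (x - y) + y * v.
Proof.
  intros Hv Hy. pose proof (pos_part_ge (x - y)). pose proof (pos_part_ge0 (x - y)). nra.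
Qed.

Fixpoint argmax (f : nat -> R) (n : nat) : nat :=
  match n with
  | O => O
  | S m => match m with
           | O => O
           | _ => if Rle_dec (f (argmax f m)) (f m) then m else argmax f m
           end
  end.

Lemma argmax_spec f n :
  (0 < n)%nat -> (argmax f n < n)%nat /\ forall i, (i < n)%nat -> f i <= f (argmax f n).
Proof.
  induction n; intros H; [lia|]. destruct n.
  - simpl. split; [lia|]. intros i Hi. replace i with 0%nat by lia. lra.
  - destruct IHn as [IH1 IH2]; [lia|].
    change (argmax f (S (S n))) with
      (if Rle_dec (f (argmax f (S n))) (f (S n)) then S n else argmax f (S n)).
    destruct (Rle_dec (f (argmax f (S n))) (f (S n))); split; try lia;
      intros i Hi; destruct (Nat.eq_dec i (S n)); subst; try lra;
      specialize (IH2 i ltac:(lia)); lra.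
Qed.


Definition expect (g : nat -> option R -> R) (L : list outcome) : R :=
  fold_right (fun o acc => match o with (q, l, w) => q * g l w + acc end) 0 L.

Lemma expect_app g L1 L2 : expect g (L1 ++ L2) = expect g L1 + expect g L2.
Proof. induction L1 as [|[[q l] w] L1 IH]; simpl; [lra|]. rewrite IH; lra. Qed.

Lemma expect_scale g p L : expect g (map (scale_out p) L) = p * expect g L.
Proof. induction L as [|[[q l] w] L IH]; simpl; [lra|]. rewrite IH; lra. Qed.

Lemma expect_addw g a L : expect g (map (addw_out a) L) = expect (fun l w => g l (oadd a w)) L.
Proof. induction L as [|[[q l] w] L IH]; simpl; [lra|]. rewrite IH; lra. Qed.

Lemma expect_ext g g' L : (forall l w, g l w = g' l w) -> expect g L = expect g' L.
Proof. intros H; induction L as [|[[q l] w] L IH]; simpl; [lra|]. rewrite IH, H; lra. Qed.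

Lemma expect_flat_map g n G :
  expect g (flat_map G (seq 0 n)) = rsum n (fun j => expect g (G j)).
Proof.
  induction n; [reflexivity|].
  rewrite seq_S, flat_map_app, expect_app, IHn. simpl. rewrite app_nil_r. reflexivity.
Qed.

Lemma expect_zero L : expect (fun _ _ => 0) L = 0.
Proof. induction L as [|[[q l] w] L IH]; simpl; lra. Qed.

Lemma expect_rsum n G L :
  expect (fun l w => rsum n (fun i => G i l w)) L = rsum n (fun i => expect (G i) L).
Proof.
  induction L as [|[[q l] w] L IH]; simpl.
  - symmetry; apply rsum_zero; auto.
  - rewrite IH, <- rsum_scal, <- rsum_plus. reflexivity.
Qed.

Lemma expect_scal c g L : expect (fun l w => c * g l w) L = c * expect g L.
Proof. induction L as [|[[q l] w] L IH]; simpl; [lra|]. rewrite IH; lra. Qed.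

Lemma prob_success_at_expect d E lam S W i :
  prob_success_at d E lam S W i =
  expect (fun l w => if successful W w then (if Nat.eqb l i then 1 else 0) else 0)
         (outcomes d E lam S).
Proof.
  unfold prob_success_at. induction (outcomes d E lam S) as [|[[q l] w] L IH]; simpl; [lra|].
  rewrite IH. destruct (successful W w); [destruct (Nat.eqb l i)|]; lra.
Qed.

(** * The work extraction game: a potential that never increases *)

Section Game.
Variables (k T : R) (d : nat).

Lemma bwidth_nonneg e : 0 <= bwidth k T e.
Proof. destruct e; simpl; [left; apply exp_pos|lra]. Qed.

Lemma run_expect_bounds S : forall E i g, valid_strategy k T d E S -> (i < d)%nat ->
  (forall l w, (l < d)%nat -> 0 <= g l w <= 1) ->
  0 <= expect g (run d E S i) <= 1.
Proof.
  induction S as [|st S IH]; intros E i g HV Hi Hg.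
  - simpl. specialize (Hg i (Some 0) Hi). lra.
  - destruct st as [B|E']; simpl in HV |- *.
    + destruct HV as [[HB0 HB1] [_ HV]]. rewrite expect_flat_map.
      rewrite (rsum_ext _ _ (fun j => B j i * expect g (run d E S j)))
        by (intros; apply expect_scale).
      split.
      * apply rsum_nonneg. intros j Hj.
        specialize (IH E j g HV Hj Hg). specialize (HB0 j i Hj Hi). nra.
      * rewrite <- (HB1 i Hi). apply rsum_le. intros j Hj.
        specialize (IH E j g HV Hj Hg). specialize (HB0 j i Hj Hi). nra.
    + rewrite expect_addw. apply IH; auto.
Qed.

Lemma gibbs_weights_fixed E B : preserves_gibbs k T d E B ->
  forall i, (i < d)%nat -> rsum d (fun j => B i j * bwidth k T (E j)) = bwidth k T (E i).
Proof.
  intros HG i Hi. set (Z := rsum d (fun j => bwidth k T (E j))).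
  destruct (Req_dec Z 0) as [Z0|Z0].
  - assert (Hc : forall j, (j < d)%nat -> bwidth k T (E j) = 0).
    { intros j Hj. pose proof (bwidth_nonneg (E j)).
      pose proof (rsum_ge_term d (fun j => bwidth k T (E j)) j
                    (fun j _ => bwidth_nonneg (E j)) Hj). fold Z in H0. lra. }
    rewrite Hc by auto. apply rsum_zero. intros j Hj. rewrite Hc by auto. ring.
  - specialize (HG i Hi). unfold gibbs_vec in HG. fold Z in HG.
    rewrite (rsum_ext _ _ (fun j => / Z * (B i j * bwidth k T (E j)))) in HG
      by (intros; unfold Rdiv; ring).
    rewrite rsum_scal in HG. unfold Rdiv in HG.
    apply (Rmult_eq_reg_l (/ Z)); [lra|apply Rinv_neq_0_compat; auto].
Qed.

Variables (W : R) (phi : nat -> R).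
Hypothesis phi01 : forall l, 0 <= phi l <= 1.

Definition succ_weight (u : R) (l : nat) (w : option R) : R :=
  if successful W (oadd (Some u) w) then phi l else 0.

Definition value (E : nat -> energy) (S : strategy) (i : nat) (u : R) : R :=
  expect (succ_weight u) (run d E S i).

Definition potential (E : nat -> energy) (S : strategy) (u : nat -> R) : R :=
  rsum d (fun i => bwidth k T (E i) * exp (- u i / (k * T)) * value E S i (u i)).

Definition potential_bound (E : nat -> energy) (S : strategy) : R :=
  exp (- W / (k * T)) * rsum d (fun i => bwidth k T (final_energies E S i) * phi i).

Lemma value_bounds E S i u : valid_strategy k T d E S -> (i < d)%nat -> 0 <= value E S i u <= 1.
Proof.
  intros. apply run_expect_bounds; auto. intros l w _.
  unfold succ_weight. destruct successful; [apply phi01|lra].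
Qed.

Hypotheses (kpos : 0 < k) (Tpos : 0 < T).

(** At the end of the game, a level contributes only if its banked work is at least [W]. *)
Lemma potential_nil E u : potential E [] u <= potential_bound E [].
Proof.
  unfold potential, potential_bound. rewrite <- rsum_scal. apply rsum_le. intros i Hi.
  unfold value, succ_weight; simpl. rewrite !Rplus_0_r, Rmult_1_l.
  pose proof (bwidth_nonneg (E i)). pose proof (phi01 i).
  pose proof (exp_pos (- u i / (k * T))).
  destruct (Rle_dec W (u i)).
  - assert (exp (- u i / (k * T)) <= exp (- W / (k * T))).
    { apply exp_le_mono. unfold Rdiv. apply Rmult_le_compat_r; [|lra].
      left; apply Rinv_0_lt_compat; nra. }
    replace (bwidth k T (E i) * exp (- u i / (k * T)) * phi i)
      with (exp (- u i / (k * T)) * (bwidth k T (E i) * phi i)) by ring.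
    apply Rmult_le_compat_r; nra.
  - rewrite Rmult_0_r. apply Rmult_le_pos; [left; apply exp_pos|nra].
Qed.

Lemma value_therm E B S i u :
  value E (Therm B :: S) i u = rsum d (fun j => B j i * value E S j u).
Proof. unfold value; simpl. rewrite expect_flat_map. apply rsum_ext; intros; apply expect_scale. Qed.

(** A Gibbs-preserving thermalisation cannot increase the potential: each target
    level [j] receives the Gibbs weight [sum_i B j i e^{-E_i/kT} = e^{-E_j/kT}], and
    can be given the most favourable banked work among those it receives. *)
Lemma potential_therm E B S :
  col_stochastic d B -> preserves_gibbs k T d E B ->
  (forall u, potential E S u <= potential_bound E S) ->
  forall u, potential E (Therm B :: S) u <= potential_bound E (Therm B :: S).
Proof.
  intros [HB0 _] HG IH u. change (potential_bound E (Therm B :: S)) with (potential_bound E S).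
  set (Phi := fun j x => exp (- x / (k * T)) * value E S j x).
  set (best := fun j => u (argmax (fun i => Phi j (u i)) d)).
  eapply Rle_trans; [|apply (IH best)].
  transitivity (rsum d (fun j => rsum d (fun i => B j i * bwidth k T (E i) * Phi j (u i)))).
  { right. unfold potential. rewrite rsum_swap. apply rsum_ext. intros i Hi.
    rewrite value_therm, <- rsum_scal. apply rsum_ext. intros j Hj. unfold Phi. ring. }
  apply rsum_le. intros j Hj.
  destruct (argmax_spec (fun i => Phi j (u i)) d ltac:(lia)) as [_ Hbest].
  transitivity (rsum d (fun i => B j i * bwidth k T (E i)) * Phi j (best j)).
  - rewrite Rmult_comm, <- rsum_scal. apply rsum_le. intros i Hi.
    specialize (Hbest i Hi). specialize (HB0 j i Hj Hi). pose proof (bwidth_nonneg (E i)).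
    assert (0 <= B j i * bwidth k T (E i)) by nra. unfold best. nra.
  - rewrite gibbs_weights_fixed by auto. unfold Phi. right; ring.
Qed.

Definition bank (eo en : energy) (u : R) : R :=
  match eo, en with Some a, Some b => u + (a - b) | _, _ => u end.

(** Level by level, an energy change turns the Gibbs weight into banked work:
    [e^{-a/kT} e^{-u/kT} = e^{-b/kT} e^{-(u + a - b)/kT}]; raising an occupied
    level to [+oo] only loses weight. *)
Lemma potential_change_level E E' S i u :
  valid_strategy k T d E' S -> (i < d)%nat ->
  bwidth k T (E i) * exp (- u / (k * T)) * value E (Change E' :: S) i u
  <= bwidth k T (E' i) * exp (- bank (E i) (E' i) u / (k * T))
     * value E' S i (bank (E i) (E' i) u).
Proof.
  intros HV Hi.
  assert (Hnn : 0 <= bwidth k T (E' i) * exp (- bank (E i) (E' i) u / (k * T))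
                     * value E' S i (bank (E i) (E' i) u)).
  { pose proof (value_bounds E' S i (bank (E i) (E' i) u) HV Hi).
    pose proof (bwidth_nonneg (E' i)). pose proof (exp_pos (- bank (E i) (E' i) u / (k * T))).
    apply Rmult_le_pos; [nra|lra]. }
  unfold value at 1. simpl run. rewrite expect_addw.
  unfold bank in *. destruct (E i) as [a|]; [destruct (E' i) as [b|]|]; simpl.
  - replace (expect _ _) with (value E' S i (u + (a - b))).
    + right. f_equal. rewrite <- !exp_plus. f_equal. field. split; lra.
    + apply expect_ext. intros l [w|]; unfold succ_weight; simpl; [rewrite Rplus_assoc|]; auto.
  - rewrite (expect_ext _ (fun _ _ => 0)), expect_zero; [lra|].
    intros l w. unfold succ_weight. destruct w; reflexivity.
  - simpl in Hnn. lra.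
Qed.

Lemma potential_change E E' S :
  valid_strategy k T d E' S ->
  (forall u, potential E' S u <= potential_bound E' S) ->
  forall u, potential E (Change E' :: S) u <= potential_bound E (Change E' :: S).
Proof.
  intros HV IH u. change (potential_bound E (Change E' :: S)) with (potential_bound E' S).
  eapply Rle_trans; [|apply (IH (fun i => bank (E i) (E' i) (u i)))].
  apply rsum_le. intros i Hi. apply potential_change_level; auto.
Qed.

Theorem potential_invariant S : forall E, valid_strategy k T d E S ->
  forall u, potential E S u <= potential_bound E S.
Proof.
  induction S as [|[B|E'] S IH]; intros E HV.
  - intros; apply potential_nil.
  - destruct HV as [HB [HG HV]]. apply potential_therm; auto.
  - apply potential_change; auto.
Qed.

End Game.

(** * The hinge-loss form of the work bound *)

Lemma success_decomposition d E lam S W phi :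
  (forall l, (d <= l)%nat -> phi l = 0) ->
  rsum d (fun i => phi i * prob_success_at d E lam S W i)
  = rsum d (fun i => lam i * value d W phi E S i 0).
Proof.
  intros Hout.
  rewrite (rsum_ext _ _ (fun i => expect (fun l w => phi i *
             (if successful W w then (if Nat.eqb l i then 1 else 0) else 0))
             (outcomes d E lam S)))
    by (intros; rewrite prob_success_at_expect, expect_scal; reflexivity).
  rewrite <- expect_rsum. unfold outcomes. rewrite expect_flat_map.
  apply rsum_ext. intros i Hi. rewrite expect_scale. f_equal. apply expect_ext.
  intros l w. unfold succ_weight.
  replace (successful W (oadd (Some 0) w)) with (successful W w)
    by (destruct w; simpl; [rewrite Rplus_0_l|]; reflexivity).
  destruct (successful W w).
  - rewrite rsum_pick. destruct (Nat.ltb_spec l d); [reflexivity|]. symmetry; apply Hout; lia.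
  - apply rsum_zero. intros; ring.
Qed.

Lemma potential_unbanked k T d E F W phi S :
  0 < k -> 0 < T -> (forall l, 0 <= phi l <= 1) ->
  valid_strategy k T d E S -> (forall i, (i < d)%nat -> final_energies E S i = F i) ->
  rsum d (fun i => bwidth k T (E i) * value d W phi E S i 0)
  <= exp (- W / (k * T)) * rsum d (fun i => bwidth k T (F i) * phi i).
Proof.
  intros kpos Tpos phi01 HV Hfin.
  pose proof (potential_invariant k T d W phi phi01 kpos Tpos S E HV (fun _ => 0)) as H.
  unfold potential, potential_bound in H.
  rewrite (rsum_ext _ _ (fun i => bwidth k T (E i) * value d W phi E S i 0)) in H.
  2:{ intros i _. replace (- 0 / (k * T)) with 0 by (field; split; lra). rewrite exp_0. ring. }
  rewrite (rsum_ext d (fun i => bwidth k T (final_energies E S i) * phi i)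
                      (fun i => bwidth k T (F i) * phi i)) in H
    by (intros; rewrite Hfin; auto).
  exact H.
Qed.

(** It follows from the potential invariant, applied to the indicator [phi] of the
    final levels on which the left-hand terms are positive. *)
Theorem hinge_work_bound k T d E F lam nu a W S mu :
  0 < k -> 0 < T ->
  valid_strategy k T d E S -> (forall i, (i < d)%nat -> final_energies E S i = F i) ->
  (forall i, (i < d)%nat -> 0 <= nu i) ->
  0 <= a <= prob_success d E lam S W ->
  (forall i, (i < d)%nat ->
     prob_success_at d E lam S W i = prob_success d E lam S W * nu i) ->
  0 <= mu ->
  rsum d (fun i => pos_part (a * nu i - mu * exp (- W / (k * T)) * bwidth k T (F i)))
  <= rsum d (fun i => pos_part (lam i - mu * bwidth k T (E i))).
Proof.
  intros kpos Tpos HV Hfin Hnu0 Ha Hjoint Hmu.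
  set (s := prob_success d E lam S W) in *.
  set (e := exp (- W / (k * T))).
  set (phi := fun l => if Nat.ltb l d then
                 (if Rle_dec (mu * e * bwidth k T (F l)) (s * nu l) then 1 else 0) else 0).
  assert (phi01 : forall l, 0 <= phi l <= 1).
  { intros l; unfold phi. destruct Nat.ltb; [destruct Rle_dec|]; lra. }
  set (V := fun i => value d W phi E S i 0).
  assert (HV01 : forall i, (i < d)%nat -> 0 <= V i <= 1)
    by (intros; apply (value_bounds k T d W phi phi01); auto).
  assert (Hdecomp : rsum d (fun i => phi i * prob_success_at d E lam S W i)
                    = rsum d (fun i => lam i * V i)).
  { apply success_decomposition. intros l Hl. unfold phi. destruct (Nat.ltb_spec l d); lra || lia. }
  assert (Hpot : rsum d (fun i => bwidth k T (E i) * V i)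
                 <= e * rsum d (fun i => bwidth k T (F i) * phi i))
    by (apply potential_unbanked; auto).
  assert (Hhinge : rsum d (fun i => lam i * V i)
        <= rsum d (fun i => pos_part (lam i - mu * bwidth k T (E i)))
           + mu * rsum d (fun i => bwidth k T (E i) * V i)).
  { rewrite <- rsum_scal, <- rsum_plus. apply rsum_le. intros i Hi.
    rewrite <- Rmult_assoc. apply pos_part_weighted; auto.
    apply Rmult_le_pos; [lra|apply bwidth_nonneg]. }
  assert (Hs : 0 <= s) by lra.
  (* [phi] selects exactly the levels where the left-hand terms are positive. *)
  transitivity (rsum d (fun i => phi i * (s * nu i - mu * e * bwidth k T (F i)))).
  { apply rsum_le. intros i Hi. unfold phi. destruct (Nat.ltb_spec i d); [|lia].
    specialize (Hnu0 i Hi). fold e.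
    destruct (Rle_dec (mu * e * bwidth k T (F i)) (s * nu i)).
    - rewrite Rmult_1_l, <- (pos_part_id (s * nu i - _)) by lra. apply pos_part_mono. nra.
    - rewrite Rmult_0_l. right. apply pos_part_zero. nra. }
  rewrite (rsum_ext _ _ (fun i => phi i * prob_success_at d E lam S W i
                                  + (- (mu * e)) * (bwidth k T (F i) * phi i)))
    by (intros i Hi; rewrite Hjoint by auto; fold s; ring).
  rewrite rsum_plus, rsum_scal, Hdecomp.
  assert (mu * rsum d (fun i => bwidth k T (E i) * V i)
          <= mu * (e * rsum d (fun i => bwidth k T (F i) * phi i)))
    by (apply Rmult_le_compat_l; auto).
  lra.
Qed.

(** * Geometry of the Gibbs rescaling *)

Definition overlap (s c X : R) : R := Rmax 0 (Rmin X (s + c) - s).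

Lemma overlap_nonneg s c X : 0 <= overlap s c X.
Proof. apply Rmax_l. Qed.

Lemma overlap_le_width s c X : 0 <= c -> overlap s c X <= c.
Proof. unfold overlap, Rmax, Rmin; intros; repeat destruct Rle_dec; lra. Qed.

Lemma overlap_le_gap s c X : s <= X -> overlap s c X <= X - s.
Proof. unfold overlap, Rmax, Rmin; intros; repeat destruct Rle_dec; lra. Qed.

Lemma overlap_left s c X : X <= s -> overlap s c X = 0.
Proof. unfold overlap, Rmax, Rmin; intros; repeat destruct Rle_dec; lra. Qed.

Lemma overlap_full s c X : 0 <= c -> s + c <= X -> overlap s c X = c.
Proof. unfold overlap, Rmax, Rmin; intros; repeat destruct Rle_dec; lra. Qed.

Lemma overlap_mid s c X : s <= X <= s + c -> overlap s c X = X - s.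
Proof. unfold overlap, Rmax, Rmin; intros; repeat destruct Rle_dec; lra. Qed.

Lemma overlap_le_X s c X : 0 <= s -> 0 <= X -> overlap s c X <= X.
Proof. unfold overlap, Rmax, Rmin; intros; repeat destruct Rle_dec; lra. Qed.

Lemma overlap_lipschitz s c X X' : X' <= X -> overlap s c X <= overlap s c X' + (X - X').
Proof. unfold overlap, Rmax, Rmin; intros; repeat destruct Rle_dec; lra. Qed.

Section Blocks.
Variables (k T : R) (d : nat) (E : nat -> energy) (lam : nat -> R).
Hypotheses (kpos : 0 < k) (Tpos : 0 < T).
Hypothesis lam0 : forall i, (i < d)%nat -> 0 <= lam i.
Hypothesis lamN : forall i, (i < d)%nat -> E i = None -> lam i = 0.
Hypothesis fin_ex : exists i, (i < d)%nat /\ E i <> None.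

Let c i := bwidth k T (E i).
Let h i := bheight k T (E i) (lam i).
Let s i := bstart k T d E lam i.
Let bef j i := before k T E lam j i.
Let Z := rsum d c.

Lemma bef_iff j i :
  bef j i = true <-> E j <> None /\ (h i < h j \/ (h j = h i /\ (j < i)%nat)).
Proof.
  unfold bef, before, h. destruct (E j) as [a|].
  - destruct Rlt_dec as [r|r]; [split; auto; intros _; split; [discriminate|auto]|].
    destruct Req_EM_T as [e|e].
    + destruct (Nat.ltb_spec j i); split; intros HH; try discriminate;
        try (split; [discriminate|]); auto.
      destruct HH as [_ [HH|[_ HH]]]; lra || lia.
    + split; intros HH; try discriminate. destruct HH as [_ [HH|[HH _]]]; lra.
  - split; intros HH; [discriminate|]. destruct HH as [HH _]; congruence.
Qed.

Lemma bef_irrefl i : bef i i = false.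
Proof.
  destruct (bef i i) eqn:H; auto.
  apply bef_iff in H. destruct H as [_ [H|[_ H]]]; lra || lia.
Qed.

Lemma bef_trans a b x : bef a b = true -> bef b x = true -> bef a x = true.
Proof.
  rewrite !bef_iff. intros [Ha H1] [Hb H2]. split; auto.
  destruct H1 as [H1|[H1 H1']]; destruct H2 as [H2|[H2 H2']]; try (left; lra).
  right; split; [lra|lia].
Qed.

Lemma bef_total i j : E i <> None -> E j <> None -> i <> j -> bef i j = true \/ bef j i = true.
Proof.
  intros Hi Hj Hij. rewrite !bef_iff.
  destruct (Rtotal_order (h i) (h j)) as [H|[H|H]]; auto.
  destruct (Nat.lt_total i j) as [H'|[H'|H']]; [left|lia|right]; split; auto.
Qed.

Lemma bef_height j i : bef j i = true -> h i <= h j.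
Proof. rewrite bef_iff. intros [_ [H|[H _]]]; lra. Qed.

Lemma not_bef_height i j : E i <> None -> bef i j = false -> h i <= h j.
Proof.
  intros Hi H. destruct (Rle_dec (h i) (h j)); auto.
  assert (bef i j = true) by (apply bef_iff; split; auto; left; lra). congruence.
Qed.

Lemma bef_finite j i : bef j i = true -> E j <> None.
Proof. rewrite bef_iff; tauto. Qed.

Lemma width_pos i : E i <> None -> 0 < c i.
Proof. unfold c. destruct (E i); [intros; simpl; apply exp_pos|congruence]. Qed.

Lemma width_nonneg i : 0 <= c i.
Proof. apply bwidth_nonneg. Qed.

Lemma block_area i : E i <> None -> lam i = h i * c i.
Proof.
  unfold h, c. destruct (E i) as [a|]; [|congruence]. intros _. simpl.
  rewrite Rmult_assoc, <- exp_plus.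
  replace (a / (k * T) + - a / (k * T)) with 0 by (field; split; lra).
  rewrite exp_0; ring.
Qed.

Lemma height_nonneg i : (i < d)%nat -> 0 <= h i.
Proof.
  intros Hi. unfold h. destruct (E i); simpl; [|lra].
  pose proof (lam0 i Hi). pose proof (exp_pos (r / (k * T))). nra.
Qed.

Lemma start_nonneg i : 0 <= s i.
Proof. apply rsum_nonneg. intros j _. fold (bef j i) (c j). destruct (bef j i); [apply width_nonneg|lra]. Qed.

Lemma bef_end_le_start j i : (j < d)%nat -> bef j i = true -> s j + c j <= s i.
Proof.
  intros Hj Hb. unfold s, bstart.
  rewrite <- (rsum_single d j (c j)) by auto. rewrite <- rsum_plus. apply rsum_le.
  intros m Hm. fold (bef m j) (bef m i) (c m). destruct (Nat.eqb_spec m j).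
  - subst. rewrite bef_irrefl, Hb. lra.
  - destruct (bef m j) eqn:H1; [rewrite (bef_trans _ _ _ H1 Hb); lra|].
    destruct (bef m i); [pose proof (width_nonneg m)|]; lra.
Qed.

Lemma end_le_total i : (i < d)%nat -> s i + c i <= Z.
Proof.
  intros Hi. unfold s, bstart, Z.
  rewrite <- (rsum_single d i (c i)) by auto. rewrite <- rsum_plus. apply rsum_le.
  intros m Hm. fold (bef m i) (c m). destruct (Nat.eqb_spec m i).
  - subst. rewrite bef_irrefl. lra.
  - destruct (bef m i); pose proof (width_nonneg m); lra.
Qed.

Lemma first_block : exists m, (m < d)%nat /\ E m <> None /\ s m = 0.
Proof.
  destruct fin_ex as [i0 [Hi0 Hf0]].
  set (key := fun j => match E j with Some _ => - s j | None => - (Z + 1) end).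
  destruct (argmax_spec key d ltac:(lia)) as [Hm Hmax]. set (m := argmax key d) in *.
  assert (Hk0 : key i0 = - s i0) by (unfold key; destruct (E i0); congruence).
  pose proof (end_le_total i0 Hi0). pose proof (width_nonneg i0). pose proof (Hmax i0 Hi0).
  assert (Hmf : E m <> None) by (intros Hn; unfold key at 2 in H1; rewrite Hn in H1; lra).
  exists m. repeat split; auto.
  apply rsum_zero. intros j Hj. fold (bef j m). destruct (bef j m) eqn:Hb; auto. exfalso.
  pose proof (bef_end_le_start j m Hj Hb). pose proof (width_pos j (bef_finite _ _ Hb)).
  pose proof (Hmax j Hj). unfold key in H4. destruct (E j) eqn:Ej; [|exact (bef_finite _ _ Hb Ej)].
  destruct (E m); [lra|congruence].
Qed.

Lemma block_at X : 0 <= X -> exists k0, (k0 < d)%nat /\ E k0 <> None /\ s k0 <= X /\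
  forall j, (j < d)%nat -> E j <> None -> bef k0 j = true -> X < s j.
Proof.
  intros HX. destruct first_block as [m [Hm [Hmf Hsm]]].
  set (key := fun j => match E j with
                       | Some _ => if Rle_dec (s j) X then s j else -1
                       | None => -1 end).
  destruct (argmax_spec key d ltac:(lia)) as [Hk Hmax]. set (k0 := argmax key d) in *.
  assert (Hkey : 0 <= key k0).
  { specialize (Hmax m Hm). unfold key at 1 in Hmax.
    destruct (E m); [|congruence]. destruct Rle_dec; lra. }
  assert (Hk0 : E k0 <> None /\ s k0 <= X /\ key k0 = s k0).
  { unfold key in *. destruct (E k0); [|lra]. destruct Rle_dec; [|lra].
    split; [discriminate|auto]. }
  destruct Hk0 as [Hkf [Hks Hke]].
  exists k0. repeat split; auto.
  intros j Hj Hjf Hb. destruct (Rlt_dec X (s j)) as [|Hn]; auto. exfalso.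
  pose proof (bef_end_le_start k0 j Hk Hb). pose proof (width_pos k0 Hkf).
  pose proof (Hmax j Hj) as Hkj. rewrite Hke in Hkj. unfold key in Hkj.
  destruct (E j); [|congruence]. destruct (Rle_dec (s j) X); lra.
Qed.

(** There are no gaps: if some block comes after [k0], then one of them
    starts at or before the end of [k0]. *)
Lemma successor_block k0 j1 : (k0 < d)%nat -> E k0 <> None -> (j1 < d)%nat -> E j1 <> None ->
  bef k0 j1 = true ->
  exists j0, (j0 < d)%nat /\ E j0 <> None /\ bef k0 j0 = true /\ s j0 <= s k0 + c k0.
Proof.
  intros Hk Hkf Hj1 Hj1f Hb1.
  set (key := fun j => match E j with
                       | Some _ => if bef k0 j then - s j else - (Z + 1)
                       | None => - (Z + 1) end).
  destruct (argmax_spec key d ltac:(lia)) as [Hj0 Hmax]. set (j0 := argmax key d) in *.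
  pose proof (end_le_total j1 Hj1). pose proof (width_nonneg j1). pose proof (Hmax j1 Hj1).
  assert (Hkj1 : key j1 = - s j1) by (unfold key; destruct (E j1); [rewrite Hb1|]; congruence).
  assert (Hj0' : E j0 <> None /\ bef k0 j0 = true /\ key j0 = - s j0).
  { rewrite Hkj1 in H1. unfold key in H1 |- *. destruct (E j0); [|lra].
    destruct (bef k0 j0); [|lra]. split; [discriminate|auto]. }
  destruct Hj0' as [Hj0f [Hj0b Hj0k]].
  exists j0. repeat split; auto.
  unfold s at 1 2, bstart. rewrite <- (rsum_single d k0 (c k0)) by auto. rewrite <- rsum_plus.
  apply rsum_le. intros m Hm. fold (bef m j0) (bef m k0) (c m). destruct (bef m j0) eqn:Hbm.
  - destruct (bef m k0) eqn:Hbk; [destruct (Nat.eqb m k0); pose proof (width_nonneg k0); lra|].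
    destruct (Nat.eqb_spec m k0); [subst; lra|]. exfalso.
    pose proof (bef_finite _ _ Hbm) as Hmf.
    destruct (bef_total m k0 Hmf Hkf n) as [H3|H3]; [congruence|].
    pose proof (bef_end_le_start m j0 Hm Hbm). pose proof (width_pos m Hmf).
    pose proof (Hmax m Hm) as Hkm. rewrite Hj0k in Hkm. unfold key in Hkm.
    destruct (E m); [|congruence]. rewrite H3 in Hkm. lra.
  - destruct (bef m k0); destruct (Nat.eqb m k0);
      pose proof (width_nonneg m); pose proof (width_nonneg k0); lra.
Qed.

(** [cumul a X]: the integral over [[0, X]] of the step function taking the value
    [a i] on block [i]. With [a = h] this is the integral of the Gibbs rescaling. *)
Definition cumul (a : nat -> R) (X : R) : R :=
  rsum d (fun i => match E i with None => 0 | Some _ => a i * overlap (s i) (c i) X end).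

Lemma split_at_block X k0 : (k0 < d)%nat ->
  rsum d (fun i => (if bef i k0 then c i else 0) + (if Nat.eqb i k0 then X - s k0 else 0)) = X.
Proof. intros Hk. rewrite rsum_plus, rsum_single by auto. unfold s, bstart, bef, c. ring. Qed.

Lemma cumul_one_le X : 0 <= X -> cumul (fun _ => 1) X <= X.
Proof.
  intros HX. destruct (block_at X HX) as [k0 [Hk [Hkf [Hks Hafter]]]].
  rewrite <- (split_at_block X k0 Hk) at 2. apply rsum_le. intros i Hi.
  destruct (E i) eqn:Ei.
  - assert (Hif : E i <> None) by congruence. rewrite Rmult_1_l.
    destruct (Nat.eqb_spec i k0).
    + subst. rewrite bef_irrefl, Rplus_0_l. apply overlap_le_gap. lra.
    + destruct (bef i k0) eqn:Hb.
      * pose proof (overlap_le_width (s i) (c i) X (width_nonneg i)). lra.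
      * destruct (bef_total i k0 Hif Hkf n) as [H1|H1]; [congruence|].
        rewrite overlap_left; [lra|]. pose proof (Hafter i Hi Hif H1). lra.
  - assert (bef i k0 = false) as ->
      by (destruct (bef i k0) eqn:Hb; auto; pose proof (bef_finite _ _ Hb); congruence).
    destruct (Nat.eqb_spec i k0); [subst; congruence|lra].
Qed.

Lemma cumul_le_hinge X mu : 0 <= X -> 0 <= mu ->
  cumul h X <= mu * X + rsum d (fun i => pos_part (lam i - mu * c i)).
Proof.
  intros HX Hmu. pose proof (cumul_one_le X HX).
  transitivity (mu * cumul (fun _ => 1) X + rsum d (fun i => pos_part (lam i - mu * c i)));
    [|apply Rplus_le_compat_r, Rmult_le_compat_l; auto].
  unfold cumul. rewrite <- rsum_scal, <- rsum_plus. apply rsum_le. intros i Hi.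
  destruct (E i) eqn:Ei.
  - assert (Hif : E i <> None) by congruence. rewrite (block_area i Hif).
    replace (h i * c i - mu * c i) with (c i * (h i - mu)) by ring.
    rewrite pos_part_scal by apply width_nonneg.
    pose proof (overlap_nonneg (s i) (c i) X). pose proof (overlap_le_width (s i) (c i) X (width_nonneg i)).
    pose proof (pos_part_ge (h i - mu)). pose proof (pos_part_ge0 (h i - mu)).
    assert ((h i - mu) * overlap (s i) (c i) X <= pos_part (h i - mu) * c i) by nra. nra.
  - rewrite Rmult_0_r, Rplus_0_l. apply pos_part_ge0.
Qed.

(** Strong duality inside a block: the slope is the height of the block containing [X]. *)
Lemma hinge_at_block X k0 : 0 <= X -> (k0 < d)%nat -> E k0 <> None -> s k0 <= X < s k0 + c k0 ->
  (forall j, (j < d)%nat -> E j <> None -> bef k0 j = true -> X < s j) ->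
  h k0 * X + rsum d (fun i => pos_part (lam i - h k0 * c i)) <= cumul h X.
Proof.
  intros HX Hk Hkf Hks Hafter.
  rewrite <- (split_at_block X k0 Hk) at 1. rewrite <- rsum_scal, <- rsum_plus.
  apply rsum_le. intros i Hi. destruct (E i) eqn:Ei.
  - assert (Hif : E i <> None) by congruence. rewrite (block_area i Hif).
    replace (h i * c i - h k0 * c i) with (c i * (h i - h k0)) by ring.
    rewrite pos_part_scal by apply width_nonneg.
    destruct (Nat.eqb_spec i k0).
    + subst. rewrite bef_irrefl, overlap_mid by lra. rewrite Rminus_diag, pos_part_id; lra.
    + destruct (bef i k0) eqn:Hb.
      * pose proof (bef_height _ _ Hb). rewrite pos_part_id by lra.
        rewrite overlap_full; [lra|apply width_nonneg|].
        pose proof (bef_end_le_start i k0 Hi Hb). lra.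
      * pose proof (not_bef_height i k0 Hif Hb). rewrite pos_part_zero by lra.
        pose proof (height_nonneg i Hi). pose proof (overlap_nonneg (s i) (c i) X). nra.
  - assert (bef i k0 = false) as ->
      by (destruct (bef i k0) eqn:Hb; auto; pose proof (bef_finite _ _ Hb); congruence).
    destruct (Nat.eqb_spec i k0); [subst; congruence|].
    rewrite (lamN i Hi Ei). unfold c. rewrite Ei. simpl.
    rewrite Rmult_0_r, Rminus_0_r, pos_part_id; lra.
Qed.

Lemma hinge_past_blocks X : (forall i, (i < d)%nat -> E i <> None -> s i + c i <= X) ->
  0 * X + rsum d (fun i => pos_part (lam i - 0 * c i)) <= cumul h X.
Proof.
  intros Hall. rewrite Rmult_0_l, Rplus_0_l. apply rsum_le. intros i Hi.
  destruct (E i) eqn:Ei.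
  - assert (Hif : E i <> None) by congruence. rewrite Rmult_0_l, Rminus_0_r.
    rewrite pos_part_id by (apply lam0; auto). rewrite (block_area i Hif).
    rewrite overlap_full; [lra|apply width_nonneg|]. apply Hall; auto.
  - rewrite (lamN i Hi Ei). rewrite Rmult_0_l, Rminus_0_r, pos_part_id; lra.
Qed.

Lemma hinge_attained X : 0 <= X -> exists mu, 0 <= mu /\
  mu * X + rsum d (fun i => pos_part (lam i - mu * c i)) <= cumul h X.
Proof.
  intros HX. destruct (block_at X HX) as [k0 [Hk [Hkf [Hks Hafter]]]].
  destruct (Rlt_dec X (s k0 + c k0)) as [Hlt|Hge].
  - exists (h k0). split; [apply height_nonneg; auto|]. apply hinge_at_block; auto.
  - exists 0. split; [lra|]. apply hinge_past_blocks. intros i Hi Hif.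
    destruct (Nat.eqb_spec i k0); [subst; lra|].
    destruct (bef_total i k0 Hif Hkf n) as [Hb|Hb].
    + pose proof (bef_end_le_start i k0 Hi Hb). pose proof (width_pos k0 Hkf). lra.
    + destruct (successor_block k0 i Hk Hkf Hi Hif Hb) as [j0 [Hj0 [Hj0f [Hj0b Hj0s]]]].
      pose proof (Hafter j0 Hj0 Hj0f Hj0b). lra.
Qed.

Lemma cumul_total X : Z <= X -> cumul h X = rsum d lam.
Proof.
  intros HX. unfold cumul. apply rsum_ext. intros i Hi. destruct (E i) eqn:Ei.
  - assert (Hif : E i <> None) by congruence. rewrite (block_area i Hif), overlap_full; auto.
    apply width_nonneg. pose proof (end_le_total i Hi). lra.
  - rewrite (lamN i Hi Ei). reflexivity.
Qed.

Lemma cumul_le_linear a X : (forall i, (i < d)%nat -> 0 <= a i) -> 0 <= X ->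
  cumul a X <= X * rsum d (fun i => match E i with None => 0 | Some _ => a i end).
Proof.
  intros Ha HX. unfold cumul. rewrite <- rsum_scal. apply rsum_le. intros i Hi.
  destruct (E i); [|lra].
  pose proof (overlap_le_X (s i) (c i) X (start_nonneg i) HX). pose proof (Ha i Hi).
  pose proof (overlap_nonneg (s i) (c i) X). nra.
Qed.

Lemma cumul_lipschitz a X X' : (forall i, (i < d)%nat -> 0 <= a i) -> X' <= X ->
  cumul a X <= cumul a X' + (X - X') * rsum d (fun i => match E i with None => 0 | Some _ => a i end).
Proof.
  intros Ha HX. unfold cumul. rewrite <- rsum_scal, <- rsum_plus. apply rsum_le. intros i Hi.
  destruct (E i); [|lra]. pose proof (overlap_lipschitz (s i) (c i) X X' HX). pose proof (Ha i Hi). nra.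
Qed.

End Blocks.

Lemma is_RInt_eqv (f : R -> R) a b (l l' : R) : is_RInt f a b l -> l = l' -> is_RInt f a b l'.
Proof. intros H ->; auto. Qed.

Lemma is_RInt_const_on (f : R -> R) a u v : u <= v -> (forall x, u < x < v -> f x = a) ->
  is_RInt f u v ((v - u) * a).
Proof.
  intros Huv H. apply (is_RInt_ext (fun _ => a)); [|exact (is_RInt_const u v a)].
  rewrite Rmin_left, Rmax_right by lra. intros x Hx. symmetry; apply H; auto.
Qed.

Lemma is_RInt_div (f : R -> R) a b v r : is_RInt f a b v -> is_RInt (fun x => f x / r) a b (v / r).
Proof.
  intros H. eapply is_RInt_eqv; [|unfold Rdiv; apply Rmult_comm].
  apply (is_RInt_ext (fun y => / r * f y)); [|exact (is_RInt_scal f a b (/ r) v H)].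
  intros; unfold Rdiv; apply Rmult_comm.
Qed.

Lemma is_RInt_rsum n (G : nat -> R -> R) (v : nat -> R) a b :
  (forall i, (i < n)%nat -> is_RInt (G i) a b (v i)) ->
  is_RInt (fun x => rsum n (fun i => G i x)) a b (rsum n v).
Proof.
  induction n; intros H; simpl.
  - eapply is_RInt_eqv; [apply is_RInt_const|]. unfold scal; simpl. unfold mult; simpl. ring.
  - apply (is_RInt_plus (fun x => rsum n (fun i => G i x)) (G n)).
    + apply IHn; intros; apply H; lia.
    + apply H; lia.
Qed.

Lemma is_RInt_block s c a X : 0 <= s -> 0 <= c -> 0 <= X ->
  is_RInt (fun x => if Rle_dec s x then if Rlt_dec x (s + c) then a else 0 else 0)
          0 X (a * overlap s c X).
Proof.
  intros Hs Hc HX.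
  assert (Hleft : forall u, 0 <= u <= s -> is_RInt (fun x => if Rle_dec s x then
             if Rlt_dec x (s + c) then a else 0 else 0) 0 u ((u - 0) * 0)).
  { intros u Hu. apply is_RInt_const_on; [lra|]. intros x Hx. destruct Rle_dec; [lra|auto]. }
  destruct (Rle_dec X s) as [H1|H1]; [|destruct (Rle_dec X (s + c)) as [H2|H2]].
  - rewrite overlap_left by auto. eapply is_RInt_eqv; [apply Hleft; lra|ring].
  - rewrite overlap_mid by lra.
    eapply is_RInt_eqv; [eapply is_RInt_Chasles with (b := s); [apply Hleft; lra|]|].
    + apply (is_RInt_const_on _ a); [lra|]. intros x Hx.
      destruct Rle_dec; [|lra]. destruct Rlt_dec; [auto|lra].
    + unfold plus; simpl. ring.
  - rewrite overlap_full by lra.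
    eapply is_RInt_eqv; [eapply is_RInt_Chasles with (b := s + c);
                         [eapply is_RInt_Chasles with (b := s); [apply Hleft; lra|]|]|].
    + apply (is_RInt_const_on _ a); [lra|]. intros x Hx.
      destruct Rle_dec; [|lra]. destruct Rlt_dec; [auto|lra].
    + apply (is_RInt_const_on _ 0); [lra|]. intros x Hx.
      destruct Rle_dec; [|lra]. destruct Rlt_dec; [lra|auto].
    + unfold plus; simpl. ring.
Qed.

Lemma gibbs_integral k T d E lam X : 0 <= X ->
  is_RInt (gibbs_rescaling k T d E lam) 0 X
          (cumul k T d E lam (fun i => bheight k T (E i) (lam i)) X).
Proof.
  intros HX. unfold gibbs_rescaling, cumul. apply is_RInt_rsum. intros i Hi.
  destruct (E i).
  - apply is_RInt_block; auto; [|apply bwidth_nonneg].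
    apply rsum_nonneg. intros j _. destruct before; [apply bwidth_nonneg|lra].
  - eapply is_RInt_eqv; [apply is_RInt_const|]. unfold scal; simpl. unfold mult; simpl. ring.
Qed.

(** * Existence of the relative mixedness *)

Lemma integral0_of f l v : is_RInt f 0 l v -> integral0 f l v.
Proof.
  intros H. exists (ex_RInt_Reals_0 f 0 l (ex_intro _ v H)).
  rewrite <- RInt_Reals. apply is_RInt_unique; auto.
Qed.

Lemma integral0_unique f l v1 v : integral0 f l v1 -> is_RInt f 0 l v -> v1 = v.
Proof. intros [pr <-] H. rewrite <- RInt_Reals. apply is_RInt_unique; auto. Qed.

Section Mixedness.
Variables (f g If Ig : R -> R).
Hypothesis f_int : forall l, 0 <= l -> is_RInt f 0 l (If l).
Hypothesis g_int : forall X, 0 <= X -> is_RInt g 0 X (Ig X).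

Lemma admissible_iff m :
  mixedness_admissible f g m <-> 0 < m /\ forall l, 0 <= l -> Ig (l * m) <= If l.
Proof.
  split.
  - intros [Hm H]. split; auto. intros l Hl. destruct (H l Hl) as [v1 [v2 [H1 [H2 H3]]]].
    rewrite <- (integral0_unique _ _ _ _ H1 (f_int l Hl)).
    rewrite <- (integral0_unique _ _ _ _ H2 (g_int (l * m) ltac:(nra))). auto.
  - intros [Hm H]. split; auto. intros l Hl. exists (If l), (Ig (l * m)).
    repeat split; [apply integral0_of, f_int; auto|apply integral0_of, g_int; nra|auto].
Qed.

Variables (A Zg H : R).
Hypothesis f_linear : forall l, 0 <= l -> If l <= A * l.
Hypotheses (Zg_nonneg : 0 <= Zg) (g_mass : 0 < Ig Zg).
Hypothesis H_nonneg : 0 <= H.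
Hypothesis g_lipschitz : forall X X', X' <= X -> Ig X <= Ig X' + (X - X') * H.

(** Admissible ratios are bounded: [g] has positive mass on [[0, Zg]], while [f]
    grows at most linearly. *)
Lemma admissible_bounded m : mixedness_admissible f g m -> m <= A * Zg / Ig Zg.
Proof.
  intros Hm. apply admissible_iff in Hm. destruct Hm as [Hm Hle].
  assert (Hl : 0 <= Zg / m) by (apply Rdiv_le_0_compat; lra).
  specialize (Hle (Zg / m) Hl). replace (Zg / m * m) with Zg in Hle by (field; lra).
  pose proof (f_linear (Zg / m) Hl).
  apply (Rmult_le_reg_r (Ig Zg)); auto. unfold Rdiv at 1. rewrite Rmult_assoc, Rinv_l, Rmult_1_r by lra.
  apply (Rmult_le_reg_l (/ m)); [apply Rinv_0_lt_compat; lra|].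
  replace (/ m * (m * Ig Zg)) with (Ig Zg) by (field; lra).
  replace (/ m * (A * Zg)) with (A * (Zg / m)) by (field; lra). lra.
Qed.

(** The admissible set is closed from below: a least upper bound [M > 0] of it is
    admissible, since [Ig] is Lipschitz. *)
Lemma admissible_lub_closed M :
  is_lub (mixedness_admissible f g) M -> 0 < M -> mixedness_admissible f g M.
Proof.
  intros [Hub Hleast] HM. apply admissible_iff. split; auto. intros l Hl.
  destruct (Rle_dec (Ig (l * M)) (If l)) as [|Hn]; auto. exfalso.
  set (delta := (Ig (l * M) - If l) / (H * l + 1)).
  assert (Hpos : 0 < H * l + 1) by nra.
  assert (Hd : 0 < delta) by (apply Rdiv_lt_0_compat; lra).
  assert (Hdelta : delta * (H * l + 1) = Ig (l * M) - If l) by (unfold delta; field; lra).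
  destruct (classic (exists m, mixedness_admissible f g m /\ M - delta < m)) as [[m [Hm Hmd]]|Hno].
  - pose proof (Hub m Hm) as HmM. apply admissible_iff in Hm. destruct Hm as [_ Hm].
    pose proof (Hm l Hl). pose proof (g_lipschitz (l * M) (l * m) ltac:(nra)).
    assert ((l * M - l * m) * H <= l * delta * H) by (apply Rmult_le_compat_r; nra).
    nra.
  - assert (M <= M - delta); [|lra]. apply Hleast. intros m Hm.
    destruct (Rle_dec m (M - delta)); auto. exfalso. apply Hno. exists m. split; auto; lra.
Qed.

Theorem rel_mixedness_exists m0 : mixedness_admissible f g m0 ->
  exists M, is_rel_mixedness f g M /\ m0 <= M.
Proof.
  intros Hm0.
  destruct (completeness (mixedness_admissible f g)) as [M [Hub Hleast]].
  - exists (A * Zg / Ig Zg). intros m Hm. apply admissible_bounded; auto.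
  - exists m0; auto.
  - assert (m0 <= M) by (apply Hub; auto).
    exists M. split; [split|]; auto.
    apply admissible_lub_closed; [split; auto|]. destruct Hm0. lra.
Qed.

End Mixedness.

(** This is weak duality for [sigma] against strong duality for [rho]. *)
Lemma dominance_of_hinge k T d E F lam nu a m0 :
  0 < k -> 0 < T -> is_state d E lam -> is_state d F nu -> 0 < a -> 0 < m0 ->
  (forall mu, 0 <= mu ->
     rsum d (fun i => pos_part (a * nu i - mu * / m0 * bwidth k T (F i)))
     <= rsum d (fun i => pos_part (lam i - mu * bwidth k T (E i)))) ->
  forall l, 0 <= l ->
  a * cumul k T d F nu (fun i => bheight k T (F i) (nu i)) (l * m0)
  <= cumul k T d E lam (fun i => bheight k T (E i) (lam i)) l.
Proof.
  intros kpos Tpos [finE [lam0 [_ lamN]]] [finF _] Ha Hm0 Hhinge l Hl.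
  destruct (hinge_attained k T d E lam kpos Tpos lam0 lamN finE l Hl) as [mu [Hmu Hstrong]].
  set (mu' := mu / (a * m0)).
  assert (Hmu' : 0 <= mu') by (unfold mu'; apply Rdiv_le_0_compat; nra).
  pose proof (cumul_le_hinge k T d F nu kpos Tpos finF (l * m0) mu' ltac:(nra) Hmu') as Hweak.
  assert (Hscale : a * rsum d (fun i => pos_part (nu i - mu' * bwidth k T (F i)))
                   = rsum d (fun i => pos_part (a * nu i - mu * / m0 * bwidth k T (F i)))).
  { rewrite <- rsum_scal. apply rsum_ext. intros i Hi. rewrite <- pos_part_scal by lra.
    f_equal. unfold mu'. field. lra. }
  assert (Hlin : a * (mu' * (l * m0)) = mu * l) by (unfold mu'; field; lra).
  specialize (Hhinge mu Hmu).
  apply (Rmult_le_compat_l a) in Hweak; [|lra].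
  rewrite Rmult_plus_distr_l, Hlin, Hscale in Hweak. lra.
Qed.

Lemma state_heights_nonneg k T d E lam : is_state d E lam ->
  forall i, (i < d)%nat -> 0 <= bheight k T (E i) (lam i).
Proof.
  intros [_ [lam0 _]] i Hi. destruct (E i); simpl; [|lra].
  pose proof (lam0 i Hi). pose proof (exp_pos (r / (k * T))). nra.
Qed.

(** Total height of the blocks: a Lipschitz constant for the cumulative mass. *)
Definition total_height k T d (E : nat -> energy) (lam : nat -> R) : R :=
  rsum d (fun i => match E i with None => 0 | Some _ => bheight k T (E i) (lam i) end).

Lemma total_height_nonneg k T d E lam : is_state d E lam -> 0 <= total_height k T d E lam.
Proof.
  intros Hs. apply rsum_nonneg. intros i Hi.
  pose proof (state_heights_nonneg k T d E lam Hs i Hi). destruct (E i); lra.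
Qed.

Lemma gibbs_rel_mixedness_exists k T d E F lam nu a m0 :
  0 < k -> 0 < T -> is_state d E lam -> is_state d F nu -> 0 < a -> 0 < m0 ->
  (forall l, 0 <= l ->
     a * cumul k T d F nu (fun i => bheight k T (F i) (nu i)) (l * m0)
     <= cumul k T d E lam (fun i => bheight k T (E i) (lam i)) l) ->
  exists M, is_rel_mixedness (fun x => gibbs_rescaling k T d E lam x / a)
                             (gibbs_rescaling k T d F nu) M /\ m0 <= M.
Proof.
  intros kpos Tpos HsE HsF Ha Hm0 Hdom.
  set (If := fun l => cumul k T d E lam (fun i => bheight k T (E i) (lam i)) l / a).
  set (Ig := cumul k T d F nu (fun i => bheight k T (F i) (nu i))).
  assert (f_int : forall l, 0 <= l ->
            is_RInt (fun x => gibbs_rescaling k T d E lam x / a) 0 l (If l))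
    by (intros; apply is_RInt_div, gibbs_integral; auto).
  assert (g_int : forall X, 0 <= X -> is_RInt (gibbs_rescaling k T d F nu) 0 X (Ig X))
    by (intros; apply gibbs_integral; auto).
  pose proof HsF as [_ [_ [nu1 nuN]]].
  apply (rel_mixedness_exists _ _ _ _ f_int g_int
           (total_height k T d E lam / a) (rsum d (fun i => bwidth k T (F i)))
           (total_height k T d F nu)).
  - intros l Hl. unfold If.
    replace (total_height k T d E lam / a * l) with (l * total_height k T d E lam / a)
      by (field; lra).
    unfold Rdiv. apply Rmult_le_compat_r; [apply Rlt_le, Rinv_0_lt_compat; lra|].
    apply cumul_le_linear; auto. apply state_heights_nonneg; auto.
  - apply rsum_nonneg. intros; apply bwidth_nonneg.
  - unfold Ig. rewrite cumul_total, nu1 by (auto || lra). lra.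
  - apply total_height_nonneg; auto.
  - intros X X' HX. apply cumul_lipschitz; auto. apply state_heights_nonneg; auto.
  - apply (proj2 (admissible_iff _ _ _ _ f_int g_int m0)). split; auto. intros l Hl.
    apply (Rmult_le_reg_l a); auto.
    replace (a * If l) with (cumul k T d E lam (fun i => bheight k T (E i) (lam i)) l)
      by (unfold If; field; lra).
    apply Hdom; auto.
Qed.

Lemma work_le_of_ratio k T W M : 0 < k -> 0 < T -> exp (W / (k * T)) <= M -> W <= k * T * ln M.
Proof.
  intros kpos Tpos HM.
  assert (W / (k * T) <= ln M)
    by (rewrite <- (ln_exp (W / (k * T))); apply ln_le; auto; apply exp_pos).
  replace W with (k * T * (W / (k * T))) by (field; split; lra).
  apply Rmult_le_compat_l; nra.
Qed.

(** The ratio [e^{W/kT}] is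
    admissible by the hinge form of the work bound, and the relative mixedness
    dominates every admissible ratio. *)
Theorem theorem1 (k T : R) (d : nat) (E F : nat -> energy) (lam nu : nat -> R)
  (eps W : R) (S : strategy) :
  0 < k -> 0 < T ->
  is_state d E lam -> is_state d F nu ->
  0 <= eps < 1 ->
  valid_strategy k T d E S ->
  (forall i, (i < d)%nat -> final_energies E S i = F i) ->
  1 - eps <= prob_success d E lam S W ->
  (forall i, (i < d)%nat ->
     prob_success_at d E lam S W i / prob_success d E lam S W = nu i) ->
  exists Mv,
    is_rel_mixedness (fun x => gibbs_rescaling k T d E lam x / (1 - eps))
                     (gibbs_rescaling k T d F nu) Mv /\
    W <= k * T * ln Mv.
Proof.
  intros kpos Tpos HsE HsF Heps HV Hfin Hs Hnu.
  set (m0 := exp (W / (k * T))).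
  assert (Hjoint : forall i, (i < d)%nat ->
            prob_success_at d E lam S W i = prob_success d E lam S W * nu i)
    by (intros i Hi; rewrite <- (Hnu i Hi); field; lra).
  assert (Hdiscount : / m0 = exp (- W / (k * T)))
    by (unfold m0; rewrite <- exp_Ropp; f_equal; field; split; lra).
  assert (Hdom : forall l, 0 <= l ->
            (1 - eps) * cumul k T d F nu (fun i => bheight k T (F i) (nu i)) (l * m0)
            <= cumul k T d E lam (fun i => bheight k T (E i) (lam i)) l).
  { apply dominance_of_hinge; auto; [lra|apply exp_pos|]. intros mu Hmu.
    rewrite Hdiscount. destruct HsF as [_ [nu0 _]].
    apply hinge_work_bound with S; auto. lra. }
  destruct (gibbs_rel_mixedness_exists k T d E F lam nu (1 - eps) m0) as [M [HM Hm0M]];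
    auto; [lra|apply exp_pos|].
  exists M. split; auto. apply work_le_of_ratio; auto.
Qed.
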